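(* Let $A\in\mathbf{R}^{n\times n}$, $C_i\in\mathbf{R}^{m_i\times n}$ ($i=1,\ldots,N$), $H\in\mathbf{R}^{p\times n}$ with $(H,A)$ observable, and let $\mathcal{L}$ be the Laplacian of a directed graph on $N$ nodes which has a spanning tree. Set $\bar A=I_N\otimes A$, $\bar C=\mathrm{diag}[C_1,\ldots,C_N]$, $\bar H=\mathcal{L}\otimes H$. If $\bigcap_{i=1}^N\mathcal{C}_i=\{0\}$, where $\mathcal{C}_i$ is the undetectable subspace of $(C_i,A)$, then the pair $\left(\begin{bmatrix}\bar C\\ \bar H\end{bmatrix},\bar A\right)$ is detectable.
   Context: Directed graph on $\{1,\ldots,N\}$ without self-loops; adjacency matrix $\mathbf{A}=[\mathbf{a}_{ij}]$ with $\mathbf{a}_{ij}=1$ if there is an edge from $j$ to $i$, else $0$; $p_i$ the in-degree of node $i$; Laplacian $\mathcal{L}=\mathrm{diag}[p_1,\ldots,p_N]-\mathbf{A}$. A spanning tree is a directed tree containing all nodes, rooted at a node from which every node is reachable by a directed path. For a square matrix $F$ with minimal polynomial $\alpha_F=\alpha_F^-\alpha_F^+$ (zeros of $\alpha_F^-$ in the open left half-plane, of $\alpha_F^+$ in the closed right half-plane), the undetectable subspace of $(G,F)$ is $\bigcap_{l=1}^n\operatorname{Ker}(GF^{l-1})\cap\operatorname{Ker}\alpha_F^+(F)$; the pair is detectable iff this subspace is $\{0\}$. *)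

From HB Require Import structures.
From mathcomp Require Import all_boot all_order all_algebra.
From mathcomp Require Import complex mxtens.
From mathcomp Require Import reals.
Set Implicit Arguments.
Unset Strict Implicit.
Unset Printing Implicit Defensive.
Import Order.TTheory GRing.Theory Num.Theory.
Local Open Scope ring_scope.

(* A directed graph on the N nodes 'I_N is a relation [e : rel 'I_N];
   [e j i] means there is an edge from j to i. *)
Definition no_self_loops N (e : rel 'I_N) : Prop := forall i, ~~ e i i.

Definition adjacency (R : pzRingType) N (e : rel 'I_N) : 'M[R]_N :=
  \matrix_(i, j) (e j i)%:R.

Definition indeg (R : pzRingType) N (e : rel 'I_N) (i : 'I_N) : R :=
  \sum_(j < N) adjacency R e i j.

Definition laplacian (R : pzRingType) N (e : rel 'I_N) : 'M[R]_N :=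
  diag_mx (\row_i indeg R e i) - adjacency R e.

(* It is given by a parent map [par]: every non-root node i has the tree
   edge (par i -> i) in the graph, and following parents from any node
   reaches the root (so the parent structure is acyclic, i.e. a tree). *)
Definition has_spanning_tree N (e : rel 'I_N) : Prop :=
  exists (r : 'I_N) (par : 'I_N -> 'I_N),
    (forall i, i != r -> e (par i) i) /\
    (forall i, exists k, iter k par i = r).

(* minimal polynomial of a square matrix (the 0x0 matrix has minimal
   polynomial 1) *)
Definition minpoly (F : fieldType) (n : nat) : 'M[F]_n -> {poly F} :=
  match n return 'M[F]_n -> {poly F} with
  | 0 => fun _ => 1
  | n'.+1 => fun A => mxminpoly A
  end.

(* evaluation q(F) = \sum_k q_k F^k of a polynomial at a square matrix
   (valid for every size n, including n = 0) *)
Definition peval_mx (K : comNzRingType) n (q : {poly K}) (F : 'M[K]_n) : 'M[K]_n :=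
  \sum_(k < size q) q`_k *: F ^+ k.

Section Unstable.
Variable R : realType.
Local Notation C := (R[i]).

Definition cplx_mx m n (M : 'M[R]_(m, n)) : 'M[C]_(m, n) :=
  map_mx (fun x : R => x%:C%C) M.

Definition minpolyC n (F : 'M[R]_n) : {poly C} :=
  map_poly (fun x : R => x%:C%C) (minpoly F).

(* its zeros, listed with multiplicity: alpha_F = \prod_(z <- r) ('X - z) *)
Definition minpoly_roots n (F : 'M[R]_n) : seq C :=
  sval (closed_field_poly_normal (minpolyC F)).

Definition alpha_plus n (F : 'M[R]_n) : {poly C} :=
  \prod_(z <- minpoly_roots F | 0 <= complex.Re z) ('X - z%:P).

Definition undetectable q n (G : 'M[R]_(q, n)) (F : 'M[R]_n)
    (x : 'cV[R]_n) : Prop :=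
  (forall l : nat, (l < n)%N -> G *m (F ^+ l) *m x = 0) /\
  peval_mx (alpha_plus F) (cplx_mx F) *m cplx_mx x = 0.

Definition detectable q n (G : 'M[R]_(q, n)) (F : 'M[R]_n) : Prop :=
  forall x, undetectable G F x -> x = 0.

Definition observable q n (G : 'M[R]_(q, n)) (F : 'M[R]_n) : Prop :=
  forall x : 'cV[R]_n,
    (forall l : nat, (l < n)%N -> G *m (F ^+ l) *m x = 0) -> x = 0.

End Unstable.

Definition blockdiag (R : pzRingType) N n (m : 'I_N -> nat)
    (Cs : forall i : 'I_N, 'M[R]_(m i, n)) : 'M[R]_(\sum_(i < N) m i, N * n) :=
  \mxcol_(i < N)
    (\matrix_(r < m i, c < N * n)
       (if (mxtens_unindex c).1 == i then Cs i r (mxtens_unindex c).2 else 0)).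

From HB Require Import structures.
From mathcomp Require Import all_boot all_order all_algebra.
From mathcomp Require Import complex mxtens.
From mathcomp Require Import reals.
Import Order.TTheory GRing.Theory Num.Theory.
Local Open Scope ring_scope.
Set Implicit Arguments.
Unset Strict Implicit.
Unset Printing Implicit Defensive.

(** Write a vector of the stacked system as x = col[x_1, ..., x_N]. If the
    outputs of (col[C; L (x) H], I (x) A) vanish along x, then observability
    of (H, A) forces (L (x) I) x = 0, i.e. sum_j a_ij (x_i - x_j) = 0 at every
    node. On a graph with a spanning tree this forces consensus: the parent
    of a node where a coordinate is maximal is again such a node, so the
    maximum (and likewise the minimum) is attained at the root and every x_i
    equals x_r. Since I (x) A acts blockwise and has the same minimal
    polynomial as A, the common block x_r lies in every undetectable
    subspace C_i, hence x_r = 0. *)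

Lemma big_mxtens_index (V : nmodType) N n (F : 'I_(N * n) -> V) :
  \sum_(k < N * n) F k = \sum_(i < N) \sum_(j < n) F (mxtens_index (i, j)).
Proof.
rewrite pair_big /= (reindex (@mxtens_index N n)) /=.
  by apply: eq_bigr => -[i j].
by exists (@mxtens_unindex N n) => k _;
  rewrite (mxtens_indexK, mxtens_unindexK).
Qed.

(* [vblock x j] is the block x_j of x = col[x_1, ..., x_N], with the
   indexing used by [A *t B]. *)
Definition vblock (K : Type) N n (x : 'cV[K]_(N * n)) (j : 'I_N) : 'cV[K]_n :=
  \col_c x (mxtens_index (j, c)) 0.

Lemma vblock_eq0 (K : nmodType) N n (x : 'cV[K]_(N * n)) :
  (forall j, vblock x j = 0) -> x = 0.
Proof.
move=> x0; apply/matrixP => k z; rewrite [z]ord1.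
case: (mxtens_indexP k) => i j.
by have := congr1 (fun M : 'cV[K]_n => M j 0) (x0 i); rewrite !mxE.
Qed.

Lemma vblock0 (K : nmodType) N n j : vblock (0 : 'cV[K]_(N * n)) j = 0.
Proof. by apply/matrixP => r z; rewrite !mxE. Qed.

Lemma map_vblock (K L : Type) (f : K -> L) N n (x : 'cV[K]_(N * n)) j :
  map_mx f (vblock x j) = vblock (map_mx f x) j.
Proof. by apply/matrixP => a b; rewrite !mxE. Qed.

Lemma vblock_tensmx_mul (K : comPzRingType) N' N q n (M : 'M[K]_(N', N))
    (B : 'M[K]_(q, n)) (x : 'cV[K]_(N * n)) i :
  vblock ((M *t B) *m x) i = \sum_j M i j *: (B *m vblock x j).
Proof.
apply/matrixP => r z; rewrite !mxE summxE big_mxtens_index.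
apply: eq_bigr => j _; rewrite !mxE mulr_sumr; apply: eq_bigr => c _.
by rewrite tensmxE !mxE mulrA.
Qed.

Lemma vblock_tens1mx_mul (K : comPzRingType) N q n (B : 'M[K]_(q, n))
    (x : 'cV[K]_(N * n)) i :
  vblock ((1%:M *t B) *m x) i = B *m vblock x i.
Proof.
rewrite vblock_tensmx_mul (bigD1 i) //= big1 => [|j /negbTE ji].
  by rewrite mxE eqxx scale1r addr0.
by rewrite mxE eq_sym ji scale0r.
Qed.

Lemma tensmx11 (K : pzRingType) N n : 1%:M *t 1%:M = 1%:M :> 'M[K]_(N * n).
Proof.
apply/matrixP => a b.
case: (mxtens_indexP a) => i j; case: (mxtens_indexP b) => k l.
rewrite tensmxE !mxE (inj_eq (can_inj (@mxtens_indexK N n))) xpair_eqE.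
by case: (i == k); case: (j == l); rewrite ?mulr1n ?mulr0n ?mul1r ?mul0r.
Qed.

Lemma tens1mxXn (K : comPzRingType) N n (F : 'M[K]_n) k :
  (1%:M *t F) ^+ k = 1%:M *t (F ^+ k) :> 'M_(N * n).
Proof.
elim: k => [|k IHk]; first by rewrite !expr0 tensmx11.
by rewrite !exprS IHk -!mulmxE tensmx_mul mul1mx.
Qed.

Lemma tensmx_sumr (K : comPzRingType) m1 n1 m2 n2 (M : 'M[K]_(m1, n1))
    (I : Type) (r : seq I) (P : pred I) (G : I -> 'M[K]_(m2, n2)) :
  M *t (\sum_(k <- r | P k) G k) = \sum_(k <- r | P k) (M *t G k).
Proof.
apply/matrixP => a b; rewrite !mxE !summxE mulr_sumr.
by apply: eq_bigr => k _; rewrite !mxE.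
Qed.

Lemma tensmxZr (K : comPzRingType) m1 n1 m2 n2 (M : 'M[K]_(m1, n1)) c
    (G : 'M[K]_(m2, n2)) :
  M *t (c *: G) = c *: (M *t G).
Proof. by apply/matrixP => a b; rewrite !mxE mulrCA. Qed.

Lemma tens1mx_eq0 (K : pzRingType) N n (X : 'M[K]_n) :
  (0 < N)%N -> 1%:M *t X = 0 :> 'M_(N * n) -> X = 0.
Proof.
case: N => // N _ X0; apply/matrixP => a b.
have := congr1 (fun M : 'M_(N.+1 * n) =>
  M (mxtens_index (ord0, a)) (mxtens_index (ord0, b))) X0.
by rewrite tensmxE !mxE mul1r.
Qed.

Lemma map_tens1mx (K L : pzRingType) (f : {rmorphism K -> L}) N n
    (A : 'M[K]_n) :
  map_mx f (1%:M *t A) = 1%:M *t map_mx f A :> 'M_(N * n).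
Proof. by rewrite map_mxT map_mx1. Qed.

Lemma peval_mx_tens1mx (K : comNzRingType) N n (q : {poly K}) (F : 'M[K]_n) :
  peval_mx q (1%:M *t F) = 1%:M *t peval_mx q F :> 'M_(N * n).
Proof.
rewrite /peval_mx tensmx_sumr; apply: eq_bigr => k _.
by rewrite tens1mxXn tensmxZr.
Qed.

Lemma peval_mxE (K : comNzRingType) k (A : 'M[K]_k.+1) (p : {poly K}) :
  peval_mx p A = horner_mx A p.
Proof.
rewrite -{2}[p]coefK poly_def raddf_sum; apply: eq_bigr => i _ /=.
by rewrite horner_mxZ rmorphXn /= horner_mx_X.
Qed.

Lemma minpoly_monic (K : fieldType) k (F : 'M[K]_k) : minpoly F \is monic.
Proof. by case: k F => [|k] F; [exact: monic1 | exact: mxminpoly_monic]. Qed.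

Lemma peval_mx_minpoly (K : fieldType) k (F : 'M[K]_k) :
  peval_mx (minpoly F) F = 0.
Proof.
case: k F => [|k] F; first exact: thinmx0.
by rewrite peval_mxE mx_root_minpoly.
Qed.

Lemma minpoly_min (K : fieldType) k (F : 'M[K]_k) (p : {poly K}) :
  peval_mx p F = 0 -> minpoly F %| p.
Proof.
case: k F => [|k] F; first by rewrite dvd1p.
by rewrite peval_mxE; apply: mxminpoly_min.
Qed.

Lemma minpoly_tens1mx (K : fieldType) N n (A : 'M[K]_n) : (0 < N)%N ->
  minpoly (1%:M *t A : 'M_(N * n)) = minpoly A.
Proof.
move=> N_gt0; apply/eqP; rewrite -eqp_monic ?minpoly_monic //.
apply/andP; split; apply: minpoly_min.
  by rewrite peval_mx_tens1mx peval_mx_minpoly tensmx0.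
by apply: (tens1mx_eq0 N_gt0); rewrite -peval_mx_tens1mx peval_mx_minpoly.
Qed.

Lemma alpha_plus_tens1mx (R : realType) N n (A : 'M[R]_n) : (0 < N)%N ->
  alpha_plus (1%:M *t A : 'M_(N * n)) = alpha_plus A.
Proof.
by move=> N_gt0; rewrite /alpha_plus /minpoly_roots /minpolyC minpoly_tens1mx.
Qed.

Lemma laplacian_mulE (R : pzRingType) N (e : rel 'I_N) (w : 'I_N -> R) i :
  \sum_j laplacian R e i j * w j = \sum_j (e j i)%:R * (w i - w j).
Proof.
under eq_bigr => j _ do rewrite !mxE mulrBl.
under [RHS]eq_bigr => j _ do rewrite mulrBr.
rewrite !sumrB; congr (_ - _).
rewrite (bigD1 i) //= big1 => [|j /negbTE ji]; last first.
  by rewrite eq_sym ji mulr0n mul0r.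
rewrite eqxx mulr1n addr0 /indeg mulr_suml.
by apply: eq_bigr => j _; rewrite !mxE.
Qed.

Section SpanningTree.

Variables (N : nat) (r : 'I_N) (par : 'I_N -> 'I_N).
Hypothesis par_reaches_root : forall i, exists k, iter k par i = r.

Lemma parent_closed_root (P : pred 'I_N) :
  (forall i, i != r -> P i -> P (par i)) -> forall i, P i -> P r.
Proof.
move=> P_par i; have [k] := par_reaches_root i.
elim: k i => [|k IHk] i; first by move=> <-.
rewrite iterSr => iter_r Pi; have [<- //|ir] := eqVneq i r.
exact: IHk iter_r (P_par i ir Pi).
Qed.

Variables (R : realDomainType) (e : rel 'I_N).
Hypothesis par_edge : forall i, i != r -> e (par i) i.

Lemma laplacian_harmonic_le_root (w : 'I_N -> R) :
  (forall i, \sum_j laplacian R e i j * w j = 0) -> forall i, w i <= w r.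
Proof.
move=> harmonic.
have [imax _ max_imax] := @arg_maxP _ R _ r xpredT w isT.
pose maximal j := [forall l, w l <= w j].
have : maximal r.
  apply: (parent_closed_root (P := maximal) _ (i := imax)); last first.
    by apply/forallP => l; exact: max_imax.
  move=> j jr /forallP max_j; apply/forallP => l.
  (* at a maximum every term of the Laplacian sum is >= 0, so each vanishes *)
  have := harmonic j; rewrite laplacian_mulE => /eqP.
  rewrite psumr_eq0 => [/allP/(_ (par j))|l' _]; last first.
    by rewrite mulr_ge0 ?ler0n ?subr_ge0.
  rewrite mem_index_enum par_edge // mul1r subr_eq0 => /(_ isT)/eqP <-.
  exact: max_j.
by move=> /forallP.
Qed.

Lemma laplacian_harmonic_const (w : 'I_N -> R) :
  (forall i, \sum_j laplacian R e i j * w j = 0) -> forall i, w i = w r.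
Proof.
move=> harmonic i; apply/eqP; rewrite eq_le laplacian_harmonic_le_root //=.
have harmonicN l : \sum_j laplacian R e l j * - w j = 0.
  by under eq_bigr => j _ do rewrite mulrN; rewrite sumrN harmonic oppr0.
by rewrite -lerN2 (laplacian_harmonic_le_root harmonicN).
Qed.

Lemma laplacian_kernel_consensus n (x : 'cV[R]_(N * n)) :
  (laplacian R e *t 1%:M) *m x = 0 -> forall i, vblock x i = vblock x r.
Proof.
move=> Lx0 i; apply/matrixP => c z; rewrite [z]ord1.
apply: (laplacian_harmonic_const (w := fun j => vblock x j c 0)) => l.
have := congr1 (fun y : 'cV_(N * n) => vblock y l c 0) Lx0.
rewrite vblock_tensmx_mul vblock0 summxE !mxE => Lxl; rewrite -[RHS]Lxl.
by apply: eq_bigr => j _; rewrite mul1mx [RHS]mxE.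
Qed.

End SpanningTree.

Lemma submxcol_blockdiag_mul (R : pzRingType) N n (m : 'I_N -> nat)
    (Cs : forall i : 'I_N, 'M[R]_(m i, n)) (y : 'cV[R]_(N * n)) i :
  submxcol (blockdiag Cs *m y) i = Cs i *m vblock y i.
Proof.
rewrite /blockdiag mxcol_mul mxcolK; apply/matrixP => a b.
rewrite [RHS]mxE mxE big_mxtens_index.
under eq_bigr => j _ do under eq_bigr => c _ do rewrite mxE mxtens_indexK.
rewrite (bigD1 i) //= eqxx [X in _ + X]big1 ?addr0 => [|j ji]; last first.
  by rewrite big1 // => c _; rewrite (negbTE ji) mul0r.
by apply: eq_bigr => c _; rewrite mxE [b]ord1.
Qed.

Lemma observable_tensmx_kernel (R : realType) N n p (M : 'M[R]_N)
    (H : 'M[R]_(p, n)) (A : 'M[R]_n) (x : 'cV[R]_(N * n)) :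
  observable H A ->
  (forall l, (l < n)%N -> (M *t H) *m (1%:M *t A) ^+ l *m x = 0) ->
  (M *t 1%:M) *m x = 0.
Proof.
move=> obsHA MHx0; apply: vblock_eq0 => i; apply: obsHA => l ln.
have := MHx0 l ln; rewrite tens1mxXn tensmx_mul mulmx1 => MHAx0.
by rewrite -vblock_tens1mx_mul mulmxA tensmx_mul mul1mx mulmx1 MHAx0 vblock0.
Qed.

Lemma undetectable_col_mx (R : realType) q1 q2 n (G1 : 'M[R]_(q1, n))
    (G2 : 'M[R]_(q2, n)) (F : 'M[R]_n) (x : 'cV[R]_n) :
  undetectable (col_mx G1 G2) F x ->
  undetectable G1 F x /\ (forall l, (l < n)%N -> G2 *m F ^+ l *m x = 0).
Proof.
move=> [GFx0 alphaFx0].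
have split_l l : (l < n)%N -> G1 *m F ^+ l *m x = 0 /\ G2 *m F ^+ l *m x = 0.
  by move=> /GFx0/eqP; rewrite !mul_col_mx col_mx_eq0 => /andP[/eqP ? /eqP ?].
split; last by move=> l /split_l[].
by split => // l /split_l[].
Qed.

Lemma undetectable_blockdiag (R : realType) N n (m : 'I_N -> nat)
    (Cs : forall i : 'I_N, 'M[R]_(m i, n)) (A : 'M[R]_n) (x : 'cV[R]_(N * n)) :
  (0 < N)%N -> undetectable (blockdiag Cs) (1%:M *t A) x ->
  forall i, undetectable (Cs i) A (vblock x i).
Proof.
move=> N_gt0 [CAx0 alphaAx0] i; split => [l ln|].
  rewrite -mulmxA -vblock_tens1mx_mul -submxcol_blockdiag_mul mulmxA -tens1mxXn.
  by rewrite CAx0 ?submxcol0 // (leq_trans ln (leq_pmull n N_gt0)).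
have := congr1 (fun y => vblock y i) alphaAx0.
rewrite /cplx_mx (map_tens1mx (real_complex R)) alpha_plus_tens1mx //.
by rewrite peval_mx_tens1mx vblock_tens1mx_mul map_vblock vblock0.
Qed.

Unset Implicit Arguments.
Set Strict Implicit.

Theorem corollary1 (R : realType) (n N p : nat) (m : 'I_N -> nat)
    (A : 'M[R]_n) (Cs : forall i : 'I_N, 'M[R]_(m i, n)) (H : 'M[R]_(p, n))
    (e : rel 'I_N) :
  observable H A ->
  no_self_loops e ->
  has_spanning_tree e ->
  (forall x : 'cV[R]_n, (forall i : 'I_N, undetectable (Cs i) A x) -> x = 0) ->
  detectable (col_mx (blockdiag Cs) (laplacian R e *t H))
             ((1%:M : 'M[R]_N) *t A).
Proof.
move=> obsHA _ [r [par [par_edge par_root]]] undet_Cs x.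
move=> /undetectable_col_mx[undet_diag undet_lap].
have N_gt0 : (0 < N)%N := leq_ltn_trans (leq0n r) (ltn_ord r).
have Lx0 : (laplacian R e *t 1%:M) *m x = 0.
  apply: (observable_tensmx_kernel obsHA) => l ln; apply: undet_lap.
  exact: leq_trans ln (leq_pmull n N_gt0).
have consensus := laplacian_kernel_consensus par_root par_edge Lx0.
have xr0 : vblock x r = 0.
  apply: undet_Cs => i; rewrite -(consensus i).
  exact: undetectable_blockdiag.
by apply: vblock_eq0 => i; rewrite consensus.
Qed.
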